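(* (Uncertainty Principle.) Let $G$ be a locally compact abelian group with dual group $\Gamma$, let $(\mu,\nu)$ be a spectral pair of positive Borel measures on $(G,\Gamma)$ with associated unitary $F\colon\mathcal{L}^2(\mu)\to\mathcal{L}^2(\nu)$, and let $f\in\mathcal{L}^2(\mu)$ with $\|f\|_\mu>0$. Let $\varepsilon,\delta\ge0$. If $A\subset G$ and $B\subset\Gamma$ are measurable sets such that $\|f-\chi_Af\|_\mu\le\varepsilon\|f\|_\mu$ and $\|Ff-\chi_BFf\|_\nu\le\delta\|Ff\|_\nu$, then $(1-\varepsilon-\delta)^2\le\mu(A)\nu(B)$.
   Context: $G$ is written additively; $\Gamma=\hat G$ is the group of continuous homomorphisms $G\to\mathbb{T}$ (unit circle in $\mathbb{C}$), with $G$ identified with the dual of $\Gamma$. Write $\langle x,\xi\rangle$ for the pairing, $e_\xi(x)=e_x(\xi)=\langle x,\xi\rangle$. $(\mu,\nu)$ is a spectral pair if, with $(Ff)(\xi)=\int_G f(x)\overline{e_\xi(x)}\,d\mu(x)$ for $f\in\mathcal{L}^1\cap\mathcal{L}^2(\mu)$, the set $\{Ff\}$ is dense in $\mathcal{L}^2(\nu)$ and $\int_\Gamma|Ff|^2d\nu=\int_G|f|^2d\mu$ for all such $f$; $F$ then extends by continuity to an isometric isomorphism of $\mathcal{L}^2(\mu)$ onto $\mathcal{L}^2(\nu)$. $\chi_A$ denotes the indicator function of $A$.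
   Formalization: The tolerances ε and δ are also constrained by ε + δ ≤ 1, beyond ε, δ ≥ 0. The statement above fails without it. *)

From HB Require Import structures.
From mathcomp Require Import all_boot all_order all_algebra.
From mathcomp Require Import all_classical all_reals all_analysis.
From mathcomp Require Import complex.
Import Order.TTheory GRing.Theory Num.Theory.

Set Implicit Arguments.
Unset Strict Implicit.
Unset Printing Implicit Defensive.

Local Open Scope ring_scope.
Local Open Scope classical_set_scope.

Definition borelT (G : topologicalZmodType) :=
  @g_sigma_algebraType (GRing.Zmodule.sort G : pointedType) (@open G).

Definition cnorm {R : realType} (z : R[i]) : R := ComplexField.Normc.normc z.

Definition ccontinuous {R : realType} {T : topologicalType} (h : T -> R[i]) :=
  continuous (fun x => complex.Re (h x) : R^o) /\ continuous (fun x => complex.Im (h x) : R^o).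

Definition is_character {R : realType} {G : topologicalZmodType} (h : G -> R[i]) :=
  [/\ forall x, cnorm (h x) = 1,
      forall x y, h (x + y) = h x * h y
    & ccontinuous h].

(* Gam is (a realization of) the dual group of G via the pairing
   e x xi = <x, xi> = e_xi(x):  xi |-> e_xi is a group isomorphism of Gam onto the
   group of continuous characters of G (with pointwise product), and the topology of
   Gam is the compact-open topology (uniform convergence on compact subsets of G). *)
Definition dual_pairing {R : realType} {G Gam : topologicalZmodType}
    (e : G -> Gam -> R[i]) :=
  [/\ forall xi, is_character (fun x => e x xi),
      forall x xi eta, e x (xi + eta) = e x xi * e x eta,
      forall xi eta, (forall x, e x xi = e x eta) -> xi = eta,
      forall chi : G -> R[i], is_character chi -> exists xi, forall x, chi x = e x xi
    & forall (xi0 : Gam) (N : set Gam),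
        nbhs xi0 N <->
        exists K : set G, compact K /\
          exists2 r : R, 0 < r &
            [set xi | forall x, K x -> cnorm (e x xi - e x xi0) < r] `<=` N].

Section Lspaces.
Context {R : realType} {d : measure_display} {T : measurableType d}.
Variable mu : {measure set T -> \bar R}.

Definition cmeasurable (f : T -> R[i]) :=
  measurable_fun setT (fun x => complex.Re (f x)) /\
  measurable_fun setT (fun x => complex.Im (f x)).

Definition sqnorm (f : T -> R[i]) : \bar R :=
  (\int[mu]_x ((cnorm (f x)) ^+ 2)%:E)%E.

Definition L2 (f : T -> R[i]) := cmeasurable f /\ (sqnorm f < +oo)%E.

Definition L1 (f : T -> R[i]) :=
  cmeasurable f /\ (\int[mu]_x (cnorm (f x))%:E < +oo)%E.

Definition norm2 (f : T -> R[i]) : R := Num.sqrt (fine (sqnorm f)).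

Definition cintegral (f : T -> R[i]) : R[i] :=
  Complex (fine (\int[mu]_x (complex.Re (f x))%:E)%E)
          (fine (\int[mu]_x (complex.Im (f x))%:E)%E).

End Lspaces.

Definition fourier {R : realType} {G Gam : topologicalZmodType}
    (mu : {measure set borelT G -> \bar R}) (e : G -> Gam -> R[i])
    (f : borelT G -> R[i]) : borelT Gam -> R[i] :=
  fun xi => cintegral mu (fun x => f x * (conjc (e x xi))).

Definition spectral_pair {R : realType} {G Gam : topologicalZmodType}
    (mu : {measure set borelT G -> \bar R}) (nu : {measure set borelT Gam -> \bar R})
    (e : G -> Gam -> R[i]) :=
  (forall f, L1 mu f -> L2 mu f ->
     cmeasurable (fourier mu e f) /\ sqnorm nu (fourier mu e f) = sqnorm mu f) /\
  (forall g, L2 nu g -> forall r : R, 0 < r ->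
     exists f, [/\ L1 mu f, L2 mu f &
                   norm2 nu (fun xi => g xi - fourier mu e f xi) < r]).

(* F : L2(mu) -> L2(nu) is the isometric (linear) extension by continuity of F#
   from L1 /\ L2 (determined up to nu-a.e. equality). *)
Definition assoc_unitary {R : realType} {G Gam : topologicalZmodType}
    (mu : {measure set borelT G -> \bar R}) (nu : {measure set borelT Gam -> \bar R})
    (e : G -> Gam -> R[i]) (F : (borelT G -> R[i]) -> (borelT Gam -> R[i])) :=
  [/\ forall f, L2 mu f -> L2 nu (F f) /\ norm2 nu (F f) = norm2 mu f,
      forall f g (a : R[i]), L2 mu f -> L2 mu g ->
        {ae nu, forall xi, F (fun x => f x + a * g x) xi = F f xi + a * F g xi}
    & forall f, L1 mu f -> L2 mu f -> {ae nu, forall xi, F f xi = fourier mu e f xi}].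

From HB Require Import structures.
From mathcomp Require Import all_boot all_order all_algebra.
From mathcomp Require Import all_classical all_reals all_analysis.
From mathcomp Require Import measurable_realfun complex lra.
Import Order.TTheory GRing.Theory Num.Theory.

(* Write f = χ_A f + (f - χ_A f).  As F is an a.e.-additive isometry,
   ‖f‖ = ‖Ff‖ <= ‖Ff - χ_B Ff‖ + ‖χ_B F(χ_A f)‖ + ‖f - χ_A f‖ (Minkowski),
   hence (1 - ε - δ)‖f‖ <= ‖χ_B F(χ_A f)‖.  Conversely, if μ(A) < ∞ then χ_A f
   is integrable with ‖χ_A f‖_1 <= μ(A)^(1/2) ‖f‖ (Hölder), and F(χ_A f) is a.e.
   its Fourier integral, bounded by ‖χ_A f‖_1 since characters have modulus 1. *)

Set Implicit Arguments.
Unset Strict Implicit.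
Unset Printing Implicit Defensive.

Local Open Scope ring_scope.
Local Open Scope classical_set_scope.

Section ComplexNorm.
Context {R : realType}.
Implicit Types (y z : R[i]) (r : R).

Lemma cnorm_ge0 z : 0 <= cnorm z.
Proof. by case: z => a b; rewrite /cnorm sqrtr_ge0. Qed.

Lemma cnormD y z : cnorm (y + z) <= cnorm y + cnorm z.
Proof. exact: le_normcD. Qed.

Lemma cnormM y z : cnorm (y * z) = cnorm y * cnorm z.
Proof. exact: ComplexField.Normc.normcM. Qed.

Lemma cnorm_conj z : cnorm (conjc z) = cnorm z.
Proof. by case: z => a b; rewrite /cnorm /= sqrrN. Qed.

Lemma cnorm_real r : cnorm (r%:C)%C = `|r|.
Proof. by rewrite /cnorm /= expr0n /= addr0 sqrtr_sqr. Qed.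

Lemma cnorm_sqr z : cnorm z ^+ 2 = complex.Re z ^+ 2 + complex.Im z ^+ 2.
Proof. by case: z => a b; rewrite /cnorm /= sqr_sqrtr // addr_ge0 // sqr_ge0. Qed.

Lemma cnorm_indicM {T : Type} (A : set T) x z :
  cnorm ((\1_A x)%:C%C * z) = \1_A x * cnorm z.
Proof. by rewrite cnormM cnorm_real ger0_norm. Qed.

Lemma Re_realM r z : complex.Re ((r%:C)%C * z) = r * complex.Re z.
Proof. by case: z => a b /=; rewrite mul0r subr0. Qed.

Lemma Im_realM r z : complex.Im ((r%:C)%C * z) = r * complex.Im z.
Proof. by case: z => a b /=; rewrite mul0r addr0. Qed.

Lemma Re_mul_conj y z :
  complex.Re (y * conjc z) = complex.Re y * complex.Re z + complex.Im y * complex.Im z.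
Proof. by case: y => a b; case: z => c d /=; rewrite mulrN opprK. Qed.

Lemma Im_mul_conj y z :
  complex.Im (y * conjc z) = complex.Im y * complex.Re z - complex.Re y * complex.Im z.
Proof. by case: y => a b; case: z => c d /=; rewrite mulrN addrC. Qed.

Lemma Re_le_cnorm z : `|complex.Re z| <= cnorm z.
Proof.
case: z => a b; rewrite /cnorm /= -sqrtr_sqr ler_wsqrtr //.
by rewrite lerDl sqr_ge0.
Qed.

Lemma Im_le_cnorm z : `|complex.Im z| <= cnorm z.
Proof.
case: z => a b; rewrite /cnorm /= -sqrtr_sqr ler_wsqrtr //.
by rewrite lerDr sqr_ge0.
Qed.

Lemma sub_indicM {T : Type} (A : set T) x z :
  z - (\1_A x)%:C%C * z = (\1_(~` A) x)%:C%C * z.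
Proof.
rewrite !indicE in_setC; case: (x \in A) => /=; first by rewrite mul1r subrr mul0r.
by rewrite mul0r subr0 mul1r.
Qed.

Lemma cnorm_le_indic_split {T : Type} (B : set T) x y z :
  cnorm (y + z) <= cnorm z + \1_(~` B) x * cnorm (y + z) + \1_B x * cnorm y.
Proof.
rewrite !indicE in_setC; case: (x \in B) => /=.
  by rewrite mul0r mul1r addr0 addrC cnormD.
by rewrite mul1r mul0r addr0 lerDr cnorm_ge0.
Qed.

End ComplexNorm.

Section ComplexMeasurable.
Context d (T : measurableType d) (R : realType).
Implicit Types (f g : T -> R[i]).

Lemma cmeasurable_cnorm f : cmeasurable f -> measurable_fun setT (fun x => cnorm (f x)).
Proof.
move=> [mre mim].
have -> : (fun x => cnorm (f x)) =
    Num.sqrt \o (fun x => complex.Re (f x) ^+ 2 + complex.Im (f x) ^+ 2).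
  by apply: boolp.funext => x /=; case: (f x).
apply: measurableT_comp; first exact: continuous_measurable_fun (@sqrt_continuous R).
by apply: measurable_funD; exact: measurable_funX.
Qed.

Lemma cmeasurable_indicM (A : set T) f : measurable A -> cmeasurable f ->
  cmeasurable (fun x => (\1_A x)%:C%C * f x).
Proof.
move=> mA [mre mim].
have mi : measurable_fun setT (\1_A : T -> R) by exact: measurable_indic.
split.
- under eq_fun do rewrite Re_realM; exact: measurable_funM.
- under eq_fun do rewrite Im_realM; exact: measurable_funM.
Qed.

Lemma cmeasurable_mul_conj f g : cmeasurable f -> cmeasurable g ->
  cmeasurable (fun x => f x * conjc (g x)).
Proof.
move=> [mfr mfi] [mgr mgi]; split.
- under eq_fun do rewrite Re_mul_conj.
  by apply: measurable_funD; exact: measurable_funM.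
- under eq_fun do rewrite Im_mul_conj.
  by apply: measurable_funB; exact: measurable_funM.
Qed.

End ComplexMeasurable.

Section ComplexIntegration.
Context d (T : measurableType d) (R : realType) (mu : {measure set T -> \bar R}).
Implicit Types (f g : T -> R[i]) (u v : T -> R).
Local Open Scope ereal_scope.
Local Notation "'N_ p [ f ]" := (Lnorm mu p f).

Lemma Lnorm_le_ae (p : R) u v : (0 <= p)%R ->
  measurable_fun setT u -> measurable_fun setT v ->
  {ae mu, forall x, `|u x| <= `|v x|}%R -> 'N_p%:E[EFin \o u] <= 'N_p%:E[EFin \o v].
Proof.
move=> p0 mu' mv uv; rewrite unlock /=.
have mpow (w : T -> R) : measurable_fun setT w ->
    measurable_fun setT (fun x => (`|w x| `^ p)%:E).
  move=> mw; apply/measurable_EFinP.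
  by apply: (measurableT_comp (measurable_powR _)); exact: measurableT_comp.
have ge0 (w : T -> R) : (0 <= \int[mu]_x (`|w x| `^ p)%:E)%E.
  by apply: integral_ge0 => x _; rewrite lee_fin powR_ge0.
apply: gt0_ler_poweR; rewrite ?invr_ge0 ?in_itv /= ?ge0 ?leey //.
apply: ae_ge0_le_integral => //; try by move=> x _; rewrite lee_fin powR_ge0.
- exact: mpow.
- exact: mpow.
apply: filterS uv => x uvx _; rewrite lee_fin.
by apply: ge0_ler_powR; rewrite ?nnegrE.
Qed.

Lemma sqnorm_ge0 f : 0 <= sqnorm mu f.
Proof. by apply: integral_ge0 => x _; rewrite lee_fin sqr_ge0. Qed.

Lemma sqnormE f : L2 mu f -> sqnorm mu f = (norm2 mu f ^+ 2)%:E.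
Proof.
move=> [_ fin]; rewrite /norm2 sqr_sqrtr ?fine_ge0 ?sqnorm_ge0 //.
by rewrite fineK // ge0_fin_numE ?sqnorm_ge0.
Qed.

Lemma Lnorm2_cnorm f : L2 mu f ->
  'N_2%:E[(fun x => (cnorm (f x))%:E)] = (norm2 mu f)%:E.
Proof.
move=> Lf; rewrite unlock /=.
under eq_integral do rewrite ger0_norm ?cnorm_ge0 // powR_mulrn ?cnorm_ge0 //.
rewrite -/(sqnorm mu f) sqnormE // poweR_EFin powR12_sqrt ?sqr_ge0 //.
by rewrite sqrtr_sqr ger0_norm // sqrtr_ge0.
Qed.

Lemma L2_indicM (A : set T) f : measurable A -> L2 mu f ->
  L2 mu (fun x => (\1_A x)%:C%C * f x)%R.
Proof.
move=> mA [mf fin]; split; first exact: cmeasurable_indicM.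
apply: le_lt_trans fin; apply: ge0_le_integral => //.
- by move=> x _; rewrite lee_fin sqr_ge0.
- apply/measurable_EFinP/measurable_funX/cmeasurable_cnorm.
  exact: cmeasurable_indicM.
- exact/measurable_EFinP/measurable_funX/cmeasurable_cnorm.
move=> x _; rewrite lee_fin cnorm_indicM ler_pXn2r ?nnegrE ?mulr_ge0 ?cnorm_ge0 //.
by rewrite ler_piMl ?cnorm_ge0 // indicE; case: (_ \in _).
Qed.

Lemma sqnorm_indicM (B : set T) g : measurable B ->
  sqnorm mu (fun x => (\1_B x)%:C%C * g x)%R =
  \int[mu]_(x in B) ((cnorm (g x)) ^+ 2)%:E.
Proof.
move=> mB; rewrite integral_mkcond /sqnorm; apply: eq_integral => x _.
rewrite cnorm_indicM patchE indicE; case: (x \in B) => //.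
by rewrite mul1r.
by rewrite mul0r expr0n.
Qed.

Lemma Lnorm_indic (p : R) (A : set T) : p != 0%R -> measurable A ->
  'N_p%:E[EFin \o \1_A] = mu A `^ p^-1.
Proof.
move=> p0 mA; rewrite unlock /=.
congr (_ `^ _); rewrite -[A in RHS]setIT -integral_indic //.
apply: eq_integral => x _.
by rewrite indicE; case: (_ \in _); rewrite ?normr1 ?powR1 ?normr0 ?powR0.
Qed.

Lemma integral_cnorm_indicM_le (A : set T) f : measurable A -> L2 mu f ->
  \int[mu]_x (cnorm ((\1_A x)%:C%C * f x)%R)%:E <= sqrte (mu A) * (norm2 mu f)%:E.
Proof.
move=> mA Lf.
have -> : \int[mu]_x (cnorm ((\1_A x)%:C%C * f x)%R)%:E =
    'N_1[EFin \o (\1_A \* (fun x => cnorm (f x)))%R].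
  rewrite Lnorm1; apply: eq_integral => x _ /=.
  by rewrite cnorm_indicM ger0_norm // mulr_ge0 ?cnorm_ge0.
have half : (2^-1 + 2^-1 = 1 :> R)%R by rewrite -div1r -splitr.
rewrite -poweR12_sqrt // -Lnorm_indic // -(Lnorm2_cnorm Lf).
exact: hoelder (measurable_indic mA) (cmeasurable_cnorm (proj1 Lf)) _ _ half.
Qed.

Lemma cnorm_cintegral_le g : L1 mu g ->
  (cnorm (cintegral mu g) <= fine (\int[mu]_x (cnorm (g x))%:E))%R.
Proof.
move=> [[mre mim] fin].
have mg := cmeasurable_cnorm (conj mre mim).
have ig : mu.-integrable setT (fun x => (cnorm (g x))%:E).
  apply/integrableP; split; first exact/measurable_EFinP.
  rewrite (eq_integral (fun x => (cnorm (g x))%:E)) // => x _.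
  by rewrite abse_EFin ger0_norm ?cnorm_ge0.
have ire : mu.-integrable setT (fun x => (complex.Re (g x))%:E).
  apply: le_integrable ig => //; first exact/measurable_EFinP.
  by move=> x _; rewrite !abse_EFin lee_fin (ger0_norm (cnorm_ge0 _)) Re_le_cnorm.
have iim : mu.-integrable setT (fun x => (complex.Im (g x))%:E).
  apply: le_integrable ig => //; first exact/measurable_EFinP.
  by move=> x _; rewrite !abse_EFin lee_fin (ger0_norm (cnorm_ge0 _)) Im_le_cnorm.
rewrite /cintegral; set p := fine _; set q := fine _; set I := fine _.
set s := cnorm (Complex p q).
have fin_int h : mu.-integrable setT h -> (\int[mu]_x h x = (fine (\int[mu]_x h x))%:E).
  by move=> ih; rewrite fineK // integrable_fin_num.
have s_sqr : (s ^+ 2)%:E = (p%:E * \int[mu]_x (complex.Re (g x))%:E +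
                           q%:E * \int[mu]_x (complex.Im (g x))%:E).
  by rewrite (fin_int _ ire) (fin_int _ iim) -!EFinM -EFinD cnorm_sqr.
(* With [w := p + i q] the integral of [g], [|w|^2 = \int Re (g conj w) <= |w| \int |g|]. *)
have sI : (s ^+ 2 <= s * I)%R.
  rewrite -lee_fin s_sqr -!integralZl // -integralD //; last 2 first.
  - exact: integrableZl.
  - exact: integrableZl.
  rewrite EFinM /I -(fin_int _ ig) -integralZl //; apply: le_integral => //.
  - by apply: integrableD => //; exact: integrableZl.
  - exact: integrableZl.
  move=> x _; rewrite -!EFinM -EFinD lee_fin.
  have := Re_le_cnorm (g x * conjc (Complex p q))%R.
  rewrite Re_mul_conj cnormM cnorm_conj -/s => /(le_trans (ler_norm _)).
  by rewrite mulrC [(q * _)%R]mulrC [(s * _)%R]mulrC.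
have s0 : (0 <= s)%R by exact: cnorm_ge0.
have I0 : (0 <= I)%R by rewrite fine_ge0 // integral_ge0 // => x _; rewrite lee_fin cnorm_ge0.
rewrite -/s; nra.
Qed.

Lemma L1_indicM (A : set T) f : measurable A -> mu A < +oo -> L2 mu f ->
  L1 mu (fun x => (\1_A x)%:C%C * f x)%R /\
  (fine (\int[mu]_x (cnorm ((\1_A x)%:C%C * f x)%R)%:E) <=
     Num.sqrt (fine (mu A)) * norm2 mu f)%R.
Proof.
move=> mA Afin Lf.
have le := integral_cnorm_indicM_le mA Lf.
rewrite -(@fineK _ (mu A)) ?ge0_fin_numE // -EFinM in le.
have ifin : \int[mu]_x (cnorm ((\1_A x)%:C%C * f x)%R)%:E < +oo.
  exact: le_lt_trans le (ltry _).
split; first by split => //; exact: cmeasurable_indicM (proj1 Lf).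
by rewrite -lee_fin fineK // ge0_fin_numE // integral_ge0 // => x _; rewrite lee_fin cnorm_ge0.
Qed.

Lemma sqnorm_indicM_le (B : set T) g (M : R) : measurable B -> cmeasurable g ->
  {ae mu, forall x, cnorm (g x) <= M}%R ->
  sqnorm mu (fun x => (\1_B x)%:C%C * g x)%R <= (M ^+ 2)%:E * mu B.
Proof.
move=> mB mg gM; rewrite sqnorm_indicM // -integral_cst //.
apply: ae_ge0_le_integral => //.
- by move=> x _; rewrite lee_fin sqr_ge0.
- apply: measurable_funS (measurableT) _ _ => //.
  exact/measurable_EFinP/measurable_funX/cmeasurable_cnorm.
- by move=> x _; rewrite lee_fin sqr_ge0.
apply: filterS gM => x gxM _.
by rewrite lee_fin ler_pXn2r ?nnegrE ?cnorm_ge0 ?(le_trans (cnorm_ge0 _) gxM).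
Qed.

Lemma sqnorm_indicM_null (B : set T) g : measurable B -> mu B = 0 -> cmeasurable g ->
  sqnorm mu (fun x => (\1_B x)%:C%C * g x)%R = 0.
Proof.
move=> mB B0 mg; rewrite sqnorm_indicM // null_set_integral //.
apply: measurable_funS (measurableT) _ _ => //.
exact/measurable_EFinP/measurable_funX/cmeasurable_cnorm.
Qed.

End ComplexIntegration.

Section UnitaryRestriction.
Context d1 d2 (T1 : measurableType d1) (T2 : measurableType d2) (R : realType).
Variables (mu : {measure set T1 -> \bar R}) (nu : {measure set T2 -> \bar R}).
Variable F : (T1 -> R[i]) -> (T2 -> R[i]).
Hypothesis F_isometry : forall f, L2 mu f -> L2 nu (F f) /\ norm2 nu (F f) = norm2 mu f.
Hypothesis F_additive : forall f g, L2 mu f -> L2 mu g ->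
  {ae nu, forall y, F (fun x => f x + g x) y = F f y + F g y}.

Lemma norm2_le_indicM_unitary f (A : set T1) (B : set T2) :
  measurable A -> measurable B -> L2 mu f ->
  norm2 mu f <= norm2 mu (fun x => (\1_(~` A) x)%:C%C * f x) +
                norm2 nu (fun y => (\1_(~` B) y)%:C%C * F f y) +
                norm2 nu (fun y => (\1_B y)%:C%C * F (fun x => (\1_A x)%:C%C * f x) y).
Proof.
move=> mA mB Lf.
set Q := fun x => _ * f x; set P := fun x => _ * f x.
have LP : L2 mu P by exact: L2_indicM.
have LQ : L2 mu Q by exact: L2_indicM (measurableC mA) Lf.
have PQ : (fun x => P x + Q x) = f.
  by apply: boolp.funext => x; rewrite /P /Q -sub_indicM addrC subrK.
have Ff_PQ := F_additive LP LQ; rewrite PQ in Ff_PQ.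
have [LFf <-] := F_isometry Lf; have [LFQ <-] := F_isometry LQ.
have [LFP _] := F_isometry LP.
have LBc := L2_indicM (measurableC mB) LFf; have LB := L2_indicM mB LFP.
rewrite -lee_fin !EFinD -!Lnorm2_cnorm //.
pose wQ y := cnorm (F Q y).
pose wB y := cnorm ((\1_(~` B) y)%:C%C * F f y).
pose wP y := cnorm ((\1_B y)%:C%C * F P y).
have mQ : measurable_fun setT wQ by exact: cmeasurable_cnorm (proj1 LFQ).
have mB' : measurable_fun setT wB by exact: cmeasurable_cnorm (proj1 LBc).
have mP : measurable_fun setT wP by exact: cmeasurable_cnorm (proj1 LB).
have split_ae : {ae nu, forall y, `|cnorm (F f y)| <= `|wQ y + wB y + wP y|}.
  apply: filterS Ff_PQ => y FfE.
  rewrite ger0_norm ?cnorm_ge0 // ger0_norm ?addr_ge0 ?cnorm_ge0 //.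
  by rewrite /wQ /wB /wP !cnorm_indicM FfE cnorm_le_indic_split.
apply: le_trans (Lnorm_le_ae _ (cmeasurable_cnorm (proj1 LFf)) _ split_ae) _ => //.
  by apply: measurable_funD => //; exact: measurable_funD.
have le12 : (1 <= 2 :> R)%R by rewrite ler1n.
apply: le_trans (minkowski_EFin _ _ _ le12) _ => //; first exact: measurable_funD.
by apply: leeD => //; exact: minkowski_EFin.
Qed.

Lemma norm2_indicM_unitary_ge f (A : set T1) (B : set T2) (eps delta : R) :
  measurable A -> measurable B -> L2 mu f ->
  norm2 mu (fun x => f x - (\1_A x)%:C%C * f x) <= eps * norm2 mu f ->
  norm2 nu (fun y => F f y - (\1_B y)%:C%C * F f y) <= delta * norm2 nu (F f) ->
  (1 - eps - delta) * norm2 mu f <=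
    norm2 nu (fun y => (\1_B y)%:C%C * F (fun x => (\1_A x)%:C%C * f x) y).
Proof.
move=> mA mB Lf; rewrite (proj2 (F_isometry Lf)).
rewrite (boolp.funext (fun x => sub_indicM A x (f x))).
rewrite (boolp.funext (fun y => sub_indicM B y (F f y))) => fA Ff_B.
have := le_trans (norm2_le_indicM_unitary mA mB Lf) (lerD (lerD fA Ff_B) (lexx _)).
lra.
Qed.

End UnitaryRestriction.

Section CharacterFourier.
Context (R : realType) (G Gam : topologicalZmodType).
Variables (e : G -> Gam -> R[i]) (mu : {measure set borelT G -> \bar R}).

Lemma continuous_borelT_measurable (u : G -> R) :
  continuous (u : G -> R^o) -> measurable_fun (setT : set (borelT G)) u.
Proof.
move=> cu mD; apply: (measurability _ (RGenOInfty.measurableE R)) => //.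
move=> _ [_ [x ->] <-]; apply: sub_sigma_algebra; rewrite setTI.
have -> : `]x, +oo[%classic = [set y : R^o | x < y].
  by apply/seteqP; split => y /=; rewrite in_itv /= andbT.
apply: (@open_comp G R^o u [set y : R^o | x < y]); last exact: open_gt.
by move=> y _; exact: cu.
Qed.

Lemma character_cmeasurable (chi : G -> R[i]) : is_character chi ->
  cmeasurable (chi : borelT G -> R[i]).
Proof. by case=> _ _ [cre cim]; split; exact: continuous_borelT_measurable. Qed.

Lemma cnorm_fourier_le g xi : is_character (e^~ xi) -> L1 mu g ->
  cnorm (fourier mu e g xi) <= fine (\int[mu]_x (cnorm (g x))%:E)%E.
Proof.
move=> chi [mg fin].
have cn x : cnorm (g x * conjc (e x xi)) = cnorm (g x).
  by case: chi => he _ _; rewrite cnormM cnorm_conj he mulr1.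
under [X in _ <= fine X]eq_integral do rewrite -cn.
apply: cnorm_cintegral_le; split.
  exact: cmeasurable_mul_conj mg (character_cmeasurable chi).
by under eq_integral do rewrite cn.
Qed.

Variables (nu : {measure set borelT Gam -> \bar R}).
Variable F : (borelT G -> R[i]) -> (borelT Gam -> R[i]).
Hypothesis e_character : forall xi, is_character (e^~ xi).
Hypothesis F_L2 : forall f, L2 mu f -> L2 nu (F f).
Hypothesis F_fourier : forall f, L1 mu f -> L2 mu f ->
  {ae nu, forall xi, F f xi = fourier mu e f xi}.

Lemma sqnorm_indicM_fourier_le f (A : set (borelT G)) (B : set (borelT Gam)) :
  measurable A -> measurable B -> L2 mu f -> 0 < norm2 mu f ->
  (sqnorm nu (fun xi => (\1_B xi)%:C%C * F (fun x => (\1_A x)%:C%C * f x) xi)%R <=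
   mu A * nu B * (norm2 mu f ^+ 2)%:E)%E.
Proof.
move=> mA mB Lf f0; have LP := L2_indicM mA Lf.
have [Afin|] := ltP (mu A) +oo%E.
  have [L1P P_bound] := L1_indicM mA Afin Lf.
  rewrite -(@fineK _ (mu A)) ?ge0_fin_numE // -muleAC -EFinM.
  rewrite -[fine (mu A)]sqr_sqrtr ?fine_ge0 // -exprMn.
  apply: sqnorm_indicM_le => //; first exact: proj1 (F_L2 LP).
  apply: filterS (F_fourier L1P LP) => xi ->.
  exact: le_trans (cnorm_fourier_le (e_character xi) L1P) P_bound.
rewrite leye_eq => /eqP ->.
have [B0|Bpos] := eqVneq (nu B) 0%E.
  by rewrite B0 mule0 mul0e (sqnorm_indicM_null mB B0 (proj1 (F_L2 LP))).
rewrite gt0_mulye ?lt0e ?Bpos ?measure_ge0 // gt0_mulye ?leey //.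
by rewrite lte_fin exprn_gt0.
Qed.

End CharacterFourier.

Lemma ae_additive_of_linear (R : realType) (G Gam : topologicalZmodType)
    (mu : {measure set borelT G -> \bar R}) (nu : {measure set borelT Gam -> \bar R})
    (F : (borelT G -> R[i]) -> (borelT Gam -> R[i])) :
  (forall f g (a : R[i]), L2 mu f -> L2 mu g ->
     {ae nu, forall xi, F (fun x => f x + a * g x) xi = F f xi + a * F g xi}) ->
  forall f g, L2 mu f -> L2 mu g ->
    {ae nu, forall xi, F (fun x => f x + g x) xi = F f xi + F g xi}.
Proof.
move=> F_lin f g Lf Lg; have -> : (fun x => f x + g x) = (fun x => f x + 1 * g x).
  by apply: boolp.funext => x; rewrite mul1r.
by apply: filterS (F_lin f g 1 Lf Lg) => xi ->; rewrite mul1r.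
Qed.

Theorem theoremA11 (R : realType) (G Gam : topologicalZmodType)
  (hausG : hausdorff_space G) (lcG : locally_compact [set: G])
  (hausGam : hausdorff_space Gam) (lcGam : locally_compact [set: Gam])
  (e : G -> Gam -> R[i]) (he : dual_pairing e)
  (mu : {measure set borelT G -> \bar R}) (nu : {measure set borelT Gam -> \bar R})
  (hsp : spectral_pair mu nu e)
  (F : (borelT G -> R[i]) -> (borelT Gam -> R[i])) (hF : assoc_unitary mu nu e F)
  (f : borelT G -> R[i]) (hf : L2 mu f) (hf0 : 0 < norm2 mu f)
  (eps delta : R) (heps : 0 <= eps) (hdelta : 0 <= delta) (hed : eps + delta <= 1)
  (A : set (borelT G)) (B : set (borelT Gam))
  (mA : measurable A) (mB : measurable B)
  (hA : norm2 mu (fun x => f x - ((\1_A x)%:C)%C * f x) <= eps * norm2 mu f)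
  (hB : norm2 nu (fun xi => F f xi - ((\1_B xi)%:C)%C * F f xi)
          <= delta * norm2 nu (F f)) :
  (((1 - eps - delta) ^+ 2)%:E <= mu A * nu B)%E.
Proof.
move: he hF => [e_char _ _ _ _] [F_iso F_lin F_fourier].
have F_add := ae_additive_of_linear F_lin.
set a := norm2 mu f.
set Y := norm2 nu (fun xi => (\1_B xi)%:C%C * F (fun x => (\1_A x)%:C%C * f x) xi).
have lower : (1 - eps - delta) * a <= Y := norm2_indicM_unitary_ge F_iso F_add mA mB hf hA hB.
have := sqnorm_indicM_fourier_le e_char (fun u Lu => proj1 (F_iso u Lu)) F_fourier mA mB hf hf0.
rewrite sqnormE; last exact/L2_indicM/(proj1 (F_iso _ (L2_indicM mA hf))).
rewrite -/Y -/a => upper.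
have a2 : (0 < (a ^+ 2)%:E)%E by rewrite lte_fin exprn_gt0.
rewrite -(lee_pmul2r _ a2) // -EFinM -exprMn; apply: le_trans upper.
have c0 : 0 <= 1 - eps - delta by lra.
by rewrite lee_fin ler_pXn2r ?nnegrE ?mulr_ge0 ?(le_trans _ lower) ?mulr_ge0 // ltW.
Qed.
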